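(* Consider the D2EAL algorithm (without periodic reset) described in the context with horizon $T\ge1$ and $\eta_\alpha,\eta_w>0$, and fix $i\in[N]$. Assume: (Assumption 1) $\Omega_i(t)\subseteq\Omega_i(t-1)$ for all $t=1,\dots,T$; (Assumption 2) $|l(x_1,y)-l(x_2,y)|\le L_1\|x_1-x_2\|$ for all $x_1,x_2\in\mathcal A$, $y\in\mathcal Y$, for some constant $L_1\ge0$; (Assumption 3) there are nonnegative numbers $\delta_1,\dots,\delta_T$ with $\|f_{t,k}-f_{t,j}\|\le\delta_t$ for all $k,j\in[N]$, $t=1,\dots,T$. Let $\Delta_o\ge\sum_{t=1}^T\delta_t$ and $i^*\in\arg\min_{j\in[N]}L_{T,j}$. Then $$R_i^{BE}(T):=\hat L_{T,i}-L_{T,i^*}\le\frac{\eta_wT}{8}+\frac{\log d_i(0)}{\eta_w}+\frac{\eta_\alpha T}{8}+\frac{\log 2}{\eta_\alpha}+L_1\Delta_o.$$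
   Context: Setup. There are $N\ge 1$ agents indexed by $i\in[N]$ and a horizon $T\ge1$. The outcome space $\mathcal Y$ and action space $\mathcal A$ are convex subsets of $\mathbb R^n$, $\|\cdot\|$ is the Euclidean norm. The loss $l:\mathcal A\times\mathcal Y\to[0,1]$ is convex in its first argument. The target sequence $y_1,\dots,y_T\in\mathcal Y$ is arbitrary. For each agent $i$ and each $t\ge1$, an ''expert'' supplies an arbitrary prediction $f_{t,i}\in\mathcal A$ of $y_t$ (available at time $t-1$). Agents communicate over a time-varying undirected graph; $\Omega_i(t)$ is the set of neighbours of agent $i$ at time $t$, $\Lambda_i(t):=\Omega_i(t)\cup\{i\}$ and $d_i(t):=|\Lambda_i(t)|$. D2EAL (without periodic reset). Initialize $\hat f_{0,i}=f_{1,i}$, $\hat\alpha_i(0)=\hat\alpha'_i(0)=\hat w_{ii}(0)=1$ for all $i$. For $t=0,1,\dots,T-1$, each agent $i$ computes: $\alpha_i(t)=\hat\alpha_i(t)/(\hat\alpha_i(t)+\hat\alpha'_i(t))$; individual prediction $\bar f_{t+1,i}=\alpha_i(t)f_{t+1,i}+(1-\alpha_i(t))\hat f_{t,i}$; social weights $w_{ij}(t)=\hat w_{jj}(t)/\sum_{j'\in\Lambda_i(t)}\hat w_{j'j'}(t)$ for $j\in\Lambda_i(t)$ and $w_{ij}(t)=0$ otherwise; social prediction $\hat f_{t+1,i}=\sum_{j\in\Lambda_i(t)}w_{ij}(t)\bar f_{t+1,j}$. After $y_{t+1}$ is revealed, define the losses $l_{t+1,i}=l(f_{t+1,i},y_{t+1})$,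 $\hat l^-_{t+1,i}=l(\hat f_{t,i},y_{t+1})$, $\bar l_{t+1,i}=l(\bar f_{t+1,i},y_{t+1})$, $\hat l_{t+1,i}=l(\hat f_{t+1,i},y_{t+1})$, and update $\hat\alpha_i(t+1)=\hat\alpha_i(t)e^{-\eta_\alpha l_{t+1,i}}$, $\hat\alpha'_i(t+1)=\hat\alpha'_i(t)e^{-\eta_\alpha \hat l^-_{t+1,i}}$, $\hat w_{ii}(t+1)=\hat w_{ii}(t)e^{-\eta_w\bar l_{t+1,i}}$. Cumulative losses: $L_{T,i}=\sum_{t=1}^T l_{t,i}$, $\hat L^-_{T,i}=\sum_{t=1}^T\hat l^-_{t,i}$, $\bar L_{T,i}=\sum_{t=1}^T\bar l_{t,i}$, $\hat L_{T,i}=\sum_{t=1}^T\hat l_{t,i}$. *)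

From HB Require Import structures.
From mathcomp Require Import all_boot all_order all_algebra.
From mathcomp Require Import reals sequences exp.
Set Implicit Arguments. Unset Strict Implicit. Unset Printing Implicit Defensive.
Import Order.TTheory GRing.Theory Num.Theory.
Local Open Scope ring_scope.

Section D2EAL.
Variables (R : realType) (N n : nat).

Definition enorm (x : 'rV[R]_n) : R := Num.sqrt (\sum_(k < n) (x ord0 k) ^+ 2).

Definition convex_set (S : 'rV[R]_n -> Prop) : Prop :=
  forall x1 x2 (lam : R), S x1 -> S x2 -> 0 <= lam <= 1 ->
    S (lam *: x1 + (1 - lam) *: x2).

Variables (eta_a eta_w : R)
  (l : 'rV[R]_n -> 'rV[R]_n -> R)          (* loss l(action, outcome) *)
  (f : nat -> 'I_N -> 'rV[R]_n)
  (y : nat -> 'rV[R]_n)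
  (Omega : nat -> 'I_N -> {set 'I_N}).

Definition Lambda (t : nat) (i : 'I_N) : {set 'I_N} := i |: Omega t i.
Definition deg (t : nat) (i : 'I_N) : nat := #|Lambda t i|.

(* state at time t: hat alpha_i(t), hat alpha'_i(t), hat w_ii(t), hat f_{t,i} *)
Record state := State {
  s_alpha : 'I_N -> R;
  s_alpha' : 'I_N -> R;
  s_w : 'I_N -> R;
  s_fhat : 'I_N -> 'rV[R]_n }.

Definition init_state : state :=
  State (fun _ => 1) (fun _ => 1) (fun _ => 1) (fun i => f 1 i).

Definition alpha (s : state) (i : 'I_N) : R :=
  s_alpha s i / (s_alpha s i + s_alpha' s i).

Definition fbar (s : state) (t : nat) (i : 'I_N) : 'rV[R]_n :=
  alpha s i *: f t.+1 i + (1 - alpha s i) *: s_fhat s i.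

Definition wgt (s : state) (t : nat) (i j : 'I_N) : R :=
  if j \in Lambda t i then s_w s j / (\sum_(j' in Lambda t i) s_w s j') else 0.

Definition fhat_next (s : state) (t : nat) (i : 'I_N) : 'rV[R]_n :=
  \sum_(j in Lambda t i) wgt s t i j *: fbar s t j.

Definition step (s : state) (t : nat) : state :=
  State (fun i => s_alpha s i * expR (- (eta_a * l (f t.+1 i) (y t.+1))))
        (fun i => s_alpha' s i * expR (- (eta_a * l (s_fhat s i) (y t.+1))))
        (fun i => s_w s i * expR (- (eta_w * l (fbar s t i) (y t.+1))))
        (fhat_next s t).

Fixpoint state_at (t : nat) : state :=
  if t is t'.+1 then step (state_at t') t' else init_state.

Definition fhat (t : nat) (i : 'I_N) : 'rV[R]_n := s_fhat (state_at t) i.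

Definition L_expert (T : nat) (i : 'I_N) : R :=
  \sum_(1 <= t < T.+1) l (f t i) (y t).
Definition L_hat (T : nat) (i : 'I_N) : R :=
  \sum_(1 <= t < T.+1) l (fhat t i) (y t).

End D2EAL.

(* Two exponential-weights potentials are tracked for agent i: the individual
   one, alpha_i(t) + alpha'_i(t), and the social one, the sum of w_jj(t) over
   Lambda_i(t).  By convexity of the loss (Jensen) and Hoeffding's lemma, each
   round multiplies a potential by at most exp(-eta l + eta^2/8), where l is
   the loss of the prediction built from the corresponding weights; since
   Lambda_i(t) only shrinks, dropping neighbours cannot increase the social
   potential.  Bounding each final potential from below by one of its own
   terms gives hat L - bar L <= eta_w T/8 + log d_i(0)/eta_w and
   bar L - L_i <= eta_a T/8 + log 2/eta_a.  Finally the experts' predictions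
   are delta_t-close, so L_i - L_{i*} <= L1 Delta_o by the Lipschitz bound. *)

From HB Require Import structures.
From mathcomp Require Import all_boot all_order all_algebra.
From mathcomp Require Import functions reals topology normedtype.
From mathcomp Require Import sequences derive realfun exp convex.
From mathcomp Require Import interval_inference ring lra.
(* Imported last so that [convex_set] is the one of [Defs], not of [convex]. *)
From Pilot Require Import Defs.
Import Order.TTheory GRing.Theory Num.Theory.
Import numFieldNormedType.Exports.
Local Open Scope ring_scope.
Set Implicit Arguments. Unset Strict Implicit. Unset Printing Implicit Defensive.

Lemma is_derive_ler0_nincry (R : realType) (F dF : R -> R) (a : R) :
  (forall x : R, is_derive x 1 F (dF x)) -> (forall x, a < x -> dF x <= 0) ->
  forall x y, a <= x -> x <= y -> F y <= F x.
Proof.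
move=> dFx dF_le0; apply: ler0_derive1_nincry.
- by move=> x _; case: (dFx x).
- by move=> x; rewrite in_itv /= andbT => ax; rewrite derive1E derive_val dF_le0.
- apply/continuous_subspaceT => x.
  by apply/differentiable_continuous/derivable1_diffP; case: (dFx x).
Qed.

Lemma is_derive_expRN (R : realType) (x : R) : is_derive x 1 (fun y => expR (- y)) (- expR (- x)).
Proof.
apply: is_derive_eq (is_derive1_comp (is_derive_expR (- x)) (is_deriveNid x 1)) _.
by rewrite mulrN1.
Qed.

Section HoeffdingBernoulli.
Variables (R : realType) (m : R).
Hypotheses (m_ge0 : 0 <= m) (m_le1 : m <= 1).
Implicit Types x e : R.

Definition bernoulli_mgfN x : R := 1 - m + m * expR (- x).

Lemma bernoulli_mgfN_gt0 x : 0 < bernoulli_mgfN x.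
Proof.
have E_gt0 := expR_gt0 (- x); rewrite /bernoulli_mgfN.
have [m_lt1 | m_ge1] := ltP m 1; first by have := mulr_ge0 m_ge0 (ltW E_gt0); lra.
have -> : m = 1 by apply/eqP; rewrite eq_le m_le1 m_ge1.
by rewrite subrr add0r mul1r.
Qed.

Lemma is_derive_bernoulli_mgfN x :
  is_derive x 1 bernoulli_mgfN (- (m * expR (- x))).
Proof.
apply: is_derive_eq
  (is_deriveD (is_derive_cst (1 - m) x 1) (is_deriveM (is_derive_cst m x 1) (is_derive_expRN x))) _.
by rewrite /GRing.scale /cst /=; ring.
Qed.

Let q x := m * expR (- x) / bernoulli_mgfN x.

Let is_derive_q x : is_derive x 1 q (q x ^+ 2 - q x).
Proof.
have D_neq0 := lt0r_neq0 (bernoulli_mgfN_gt0 x).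
apply: is_derive_eq (is_deriveM (is_deriveM (is_derive_cst m x 1) (is_derive_expRN x))
  (is_deriveV D_neq0 (is_derive_bernoulli_mgfN x))) _.
rewrite /q /GRing.scale mulrfctE /cst /=; field; exact: D_neq0.
Qed.

(* [G] is the derivative of [ln (bernoulli_mgfN x) + m x - x^2/8]; its own
   derivative [q - q^2 - 1/4 = - (q - 1/2)^2] is nonpositive. *)
Let G x := m - q x - x / 4.

Let G_le0 x : 0 <= x -> G x <= 0.
Proof.
move=> x_ge0; have <- : G 0 = 0.
  by rewrite /G /q /bernoulli_mgfN oppr0 expR0 mulr1 subrK divr1 subrr mul0r subr0.
apply: (@is_derive_ler0_nincry _ G (fun x => - (q x - 2^-1) ^+ 2) 0) => // [z|z _].
  apply: is_derive_eq (is_deriveB (is_deriveB (is_derive_cst m z 1) (is_derive_q z))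
    (is_deriveM (is_derive_id z 1) (is_derive_cst (4^-1 : R) z 1))) _.
  by rewrite /GRing.scale /cst /=; field.
by rewrite oppr_le0 sqr_ge0.
Qed.

Lemma hoeffding_bernoulli e : 0 <= e ->
  bernoulli_mgfN e <= expR (- (m * e) + e ^+ 2 / 8).
Proof.
move=> e_ge0.
pose F x := ln (bernoulli_mgfN x) + m * x - x ^+ 2 / 8.
have F0 : F 0 = 0.
  by rewrite /F /bernoulli_mgfN oppr0 expR0 mulr1 subrK ln1 mulr0 expr0n /= mul0r subr0 addr0.
suff : F e <= F 0.
  rewrite F0 /F => F_le0.
  by rewrite -[bernoulli_mgfN e]lnK ?posrE ?bernoulli_mgfN_gt0 // ler_expR; lra.
apply: (@is_derive_ler0_nincry _ F G 0) => // [z|z /ltW]; last exact: G_le0.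
have D_gt0 := bernoulli_mgfN_gt0 z.
apply: is_derive_eq (is_deriveB (is_deriveD
    (is_derive1_comp (is_derive1_ln D_gt0) (is_derive_bernoulli_mgfN z))
    (is_deriveM (is_derive_cst m z 1) (is_derive_id z 1)))
  (is_deriveM (is_deriveM (is_derive_id z 1) (is_derive_id z 1)) (is_derive_cst (8^-1 : R) z 1))) _.
rewrite /G /q /GRing.scale /cst /=; field; exact: lt0r_neq0.
Qed.

End HoeffdingBernoulli.

Section WeightedAverage.
Variables (R : realFieldType) (I : Type) (w : I -> R).

Definition wavg (V : lmodType R) (v : I -> V) (s : seq I) : V :=
  (\sum_(j <- s) w j)^-1 *: \sum_(j <- s) w j *: v j.

Definition cons_weight (x : I) (s : seq I) : R := w x / (w x + \sum_(j <- s) w j).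

Hypothesis w_gt0 : forall j, 0 < w j.

Lemma sumr_pos_gt0 (s : seq I) : (0 < size s)%N -> 0 < \sum_(j <- s) w j.
Proof.
case: s => // x s _; rewrite big_cons.
by apply: ltr_pwDl (w_gt0 x) _; apply: sumr_ge0 => j _; exact: ltW.
Qed.

Lemma cons_weight_itv x s : 0 <= cons_weight x s <= 1.
Proof.
have W_ge0 : 0 <= \sum_(j <- s) w j by apply: sumr_ge0 => j _; exact: ltW.
have wx_gt0 := w_gt0 x.
have wW_gt0 : 0 < w x + \sum_(j <- s) w j by lra.
apply/andP; split; first exact: divr_ge0 (ltW wx_gt0) (ltW wW_gt0).
by rewrite ler_pdivrMr // mul1r lerDl.
Qed.

Lemma wavg1 (V : lmodType R) (v : I -> V) x : wavg v [:: x] = v x.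
Proof.
by rewrite /wavg !big_seq1 scalerA mulVf ?scale1r // lt0r_neq0.
Qed.

Lemma wavg_cons (V : lmodType R) (v : I -> V) x s : (0 < size s)%N ->
  wavg v (x :: s) = cons_weight x s *: v x + (1 - cons_weight x s) *: wavg v s.
Proof.
move=> s_gt0; have W_neq0 := lt0r_neq0 (sumr_pos_gt0 s_gt0).
have wW_neq0 : w x + \sum_(j <- s) w j != 0.
  by apply: lt0r_neq0; have := sumr_pos_gt0 s_gt0; have := w_gt0 x; lra.
rewrite /wavg /cons_weight !big_cons scalerDr !scalerA; congr (_ + _).
  by rewrite mulrC.
by congr (_ *: _); field; apply/andP.
Qed.

End WeightedAverage.

Section Jensen.
Variables (R : realType) (n : nat) (A Y : 'rV[R]_n -> Prop).
Variable l : 'rV[R]_n -> 'rV[R]_n -> R.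
Hypotheses (A_convex : convex_set A)
  (l_convex : forall x1 x2 z (lam : R), A x1 -> A x2 -> Y z -> 0 <= lam <= 1 ->
     l (lam *: x1 + (1 - lam) *: x2) z <= lam * l x1 z + (1 - lam) * l x2 z).
Variables (I : Type) (w : I -> R) (v : I -> 'rV[R]_n).
Hypotheses (w_gt0 : forall j, 0 < w j) (v_mem : forall j, A (v j)).

Lemma wavg_mem s : (0 < size s)%N -> A (wavg w v s).
Proof.
elim: s => // x s IH _; case: s IH => [_|x' s IH]; first by rewrite wavg1.
by rewrite wavg_cons //; apply: A_convex => //; [exact: IH | exact: cons_weight_itv].
Qed.

Lemma jensen_wavg s z : (0 < size s)%N -> Y z ->
  l (wavg w v s) z <= wavg w (fun j => l (v j) z : R^o) s.
Proof.
move=> + z_mem; elim: s => // x s IH _; case: s IH => [_|x' s IH].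
  by rewrite !wavg1.
have lam_itv := cons_weight_itv w_gt0 x (x' :: s).
rewrite ![wavg _ _ (x :: _)]wavg_cons //.
apply: le_trans (l_convex (v_mem x) (wavg_mem (s := x' :: s) isT) z_mem lam_itv) _.
have /andP[_ lam_le1] := lam_itv.
by rewrite lerD2l ler_wpM2l ?IH // subr_ge0.
Qed.

End Jensen.

Section HoeffdingWeighted.
Variable R : realType.

Lemma expR_chord (e x : R) : 0 <= x <= 1 ->
  expR (- (e * x)) <= 1 - x + x * expR (- e).
Proof.
case/andP=> x_ge0 x_le1.
have := @convex_expR R (Itv01 x_ge0 x_le1) (- e) 0.
by rewrite /= !convRE /= expR0 mulr0 addr0 mulr1 mulrN mulrC addrC.
Qed.

Lemma hoeffding_weighted (I : Type) (s : seq I) (p x : I -> R) (e z : R) :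
  0 <= e -> (forall j, 0 <= p j) -> (forall j, 0 <= x j <= 1) ->
  0 < \sum_(j <- s) p j -> z <= wavg p (fun j => x j : R^o) s ->
  \sum_(j <- s) p j * expR (- (e * x j)) <=
    (\sum_(j <- s) p j) * expR (- (e * z) + e ^+ 2 / 8).
Proof.
move=> e_ge0 p_ge0 x01 W_gt0 z_le.
set W := \sum_(j <- s) p j; set M := \sum_(j <- s) p j * x j.
have chord : \sum_(j <- s) p j * expR (- (e * x j)) <=
             \sum_(j <- s) (p j - p j * x j + p j * x j * expR (- e)).
  apply: ler_sum => j _.
  have -> : p j - p j * x j + p j * x j * expR (- e) = p j * (1 - x j + x j * expR (- e)).
    by ring.
  exact/ler_wpM2l/expR_chord.
apply: (le_trans chord); rewrite big_split /= sumrB -mulr_suml -/W -/M.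
have M_ge0 : 0 <= M by apply: sumr_ge0 => j _; have /andP[? _] := x01 j; exact: mulr_ge0.
have M_le : M <= W.
  by apply: ler_sum => j _; have /andP[_ ?] := x01 j; rewrite ler_piMr.
have W_neq0 : W != 0 by exact: lt0r_neq0.
have -> : W - M + M * expR (- e) = W * (1 - M / W + M / W * expR (- e)) by field.
apply: ler_wpM2l; first exact: ltW.
have MW_ge0 : 0 <= M / W by exact: divr_ge0 (ltW W_gt0).
have MW_le1 : M / W <= 1 by rewrite ler_pdivrMr // mul1r.
apply: le_trans (hoeffding_bernoulli MW_ge0 MW_le1 e_ge0) _.
rewrite ler_expR lerD2r lerN2 [M / W * e]mulrC ler_wpM2l // [M / W]mulrC.
exact: z_le.
Qed.

End HoeffdingWeighted.

Section Potential.
Variable R : realType.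

Lemma potential_telescope (Phi x : nat -> R) (e : R) (T : nat) :
  (forall t, (t < T)%N -> Phi t.+1 <= Phi t * expR (- (e * x t.+1) + e ^+ 2 / 8)) ->
  Phi T <= Phi 0 * expR (- (e * \sum_(1 <= u < T.+1) x u) + T%:R * (e ^+ 2 / 8)).
Proof.
elim: T => [_|T IH step].
  by rewrite big_geq // mulr0 oppr0 mul0r addr0 expR0 mulr1.
apply: le_trans (step T (ltnSn T)) _.
apply: le_trans (ler_wpM2r (ltW (expR_gt0 _)) (IH (fun t tT => step t (ltnW tT)))) _.
rewrite -mulrA -expRD [\sum_(1 <= u < T.+2) _]big_nat_recr //= mulrSr le_eqVlt; apply/orP; left.
by apply/eqP; congr (_ * expR _); ring.
Qed.

Lemma sub_le_of_potential (e c a b : R) (T : nat) : 0 < e -> 0 < c ->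
  expR (- (e * a)) <= c * expR (- (e * b) + T%:R * (e ^+ 2 / 8)) ->
  b - a <= e * T%:R / 8 + ln c / e.
Proof.
move=> e_gt0 c_gt0.
rewrite -{1}[c]lnK ?posrE // -expRD ler_expR => le_ab.
rewrite -(ler_pM2l e_gt0).
have -> : e * (e * T%:R / 8 + ln c / e) = T%:R * (e ^+ 2 / 8) + ln c.
  by field; exact: lt0r_neq0.
by rewrite mulrBr; lra.
Qed.

End Potential.

Section D2EAL.
Variables (R : realType) (N n : nat) (A Y : 'rV[R]_n -> Prop).
Variables (l : 'rV[R]_n -> 'rV[R]_n -> R) (y : nat -> 'rV[R]_n).
Variables (f : nat -> 'I_N -> 'rV[R]_n) (Omega : nat -> 'I_N -> {set 'I_N}).
Variables (eta_a eta_w : R).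
Hypotheses (A_convex : convex_set A)
  (l_convex : forall x1 x2 z (lam : R), A x1 -> A x2 -> Y z -> 0 <= lam <= 1 ->
     l (lam *: x1 + (1 - lam) *: x2) z <= lam * l x1 z + (1 - lam) * l x2 z)
  (l_itv : forall x z, A x -> Y z -> 0 <= l x z <= 1)
  (f_mem : forall t k, (1 <= t)%N -> A (f t k)).

Local Notation st := (state_at eta_a eta_w l f y Omega).

Lemma state_at_gt0 t : [/\ forall j, 0 < s_alpha (st t) j,
  forall j, 0 < s_alpha' (st t) j & forall j, 0 < s_w (st t) j].
Proof.
elim: t => [|t [a_gt0 a'_gt0 w_gt0]]; first by split=> j; exact: ltr01.
by split=> j /=; rewrite mulr_gt0 ?expR_gt0.
Qed.

(* The individual prediction is a two-point weighted average, indexed by [bool]: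
   [true] is the expert's advice and [false] the previous social prediction. *)
Definition indiv_weight t j (b : bool) : R :=
  if b then s_alpha (st t) j else s_alpha' (st t) j.
Definition indiv_choice t j (b : bool) : 'rV[R]_n :=
  if b then f t.+1 j else s_fhat (st t) j.

Lemma indiv_weight_gt0 t j b : 0 < indiv_weight t j b.
Proof. by have [a_gt0 a'_gt0 _] := state_at_gt0 t; case: b; [exact: a_gt0 | exact: a'_gt0]. Qed.

Lemma fbar_wavg t j :
  fbar f (st t) t j = wavg (indiv_weight t j) (indiv_choice t j) [:: true; false].
Proof.
have w_gt0 := indiv_weight_gt0 t j.
rewrite (wavg_cons w_gt0) // (wavg1 w_gt0) /cons_weight.
suff -> : \sum_(b <- [:: false]) indiv_weight t j b = indiv_weight t j false by [].
exact: big_seq1.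
Qed.

Lemma fhat_wavg t j : s_fhat (st t.+1) j =
  wavg (s_w (st t)) (fbar f (st t) t) (enum (Lambda Omega t j)).
Proof.
rewrite /= /fhat_next /wgt /wavg !big_enum /= scaler_sumr.
by apply: eq_bigr => k ->; rewrite scalerA mulrC.
Qed.

Lemma size_enum_Lambda t j : (0 < size (enum (Lambda Omega t j)))%N.
Proof. by rewrite -cardE card_gt0; apply/set0Pn; exists j; exact: setU11. Qed.

Lemma fbar_mem_of_fhat t j : A (s_fhat (st t) j) -> A (fbar f (st t) t j).
Proof.
move=> fhat_A; rewrite fbar_wavg.
apply: wavg_mem => //; [exact: indiv_weight_gt0 | case => //; exact: f_mem].
Qed.

Lemma fhat_mem t j : A (s_fhat (st t) j).
Proof.
elim: t j => [|t IH] j; first exact: f_mem.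
have [_ _ w_gt0] := state_at_gt0 t.
rewrite fhat_wavg; apply: wavg_mem => // [k|]; last exact: size_enum_Lambda.
exact/fbar_mem_of_fhat/IH.
Qed.

Lemma fbar_mem t j : A (fbar f (st t) t j).
Proof. exact/fbar_mem_of_fhat/fhat_mem. Qed.

(* [fbar f (st t) t j] is the paper's bar f_{t+1,j}. *)
Definition L_bar T j : R := \sum_(1 <= t < T.+1) l (fbar f (st t.-1) t.-1 j) (y t).

Lemma s_alpha_state_at t j : s_alpha (st t) j = expR (- (eta_a * L_expert l f y t j)).
Proof.
elim: t => [|t IH]; first by rewrite /L_expert big_geq // mulr0 oppr0 expR0.
by rewrite /= IH /L_expert [in RHS]big_nat_recr //= -expRD mulrDr opprD.
Qed.

Lemma s_w_state_at t j : s_w (st t) j = expR (- (eta_w * L_bar t j)).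
Proof.
elim: t => [|t IH]; first by rewrite /L_bar big_geq // mulr0 oppr0 expR0.
by rewrite /= IH /L_bar [in RHS]big_nat_recr //= -expRD mulrDr opprD.
Qed.

Lemma indiv_potential_step t j : 0 < eta_a -> Y (y t.+1) ->
  s_alpha (st t.+1) j + s_alpha' (st t.+1) j <=
  (s_alpha (st t) j + s_alpha' (st t) j) *
    expR (- (eta_a * l (fbar f (st t) t j) (y t.+1)) + eta_a ^+ 2 / 8).
Proof.
move=> eta_gt0 y_mem.
have w_gt0 := indiv_weight_gt0 t j.
have loss_itv b : 0 <= l (indiv_choice t j b) (y t.+1) <= 1.
  by apply: l_itv => //; case: b; [exact: f_mem | exact: fhat_mem].
have := hoeffding_weighted (s := [:: true; false]) (ltW eta_gt0) (fun b => ltW (w_gt0 b))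
  loss_itv (sumr_pos_gt0 w_gt0 (s := [:: true; false]) isT) _.
rewrite !big_cons !big_nil !addr0 /=; apply; rewrite fbar_wavg.
apply: (jensen_wavg A_convex l_convex w_gt0) => //.
by case; [exact: f_mem | exact: fhat_mem].
Qed.

Lemma social_potential_step t j : 0 < eta_w -> Y (y t.+1) ->
  Omega t.+1 j \subset Omega t j ->
  \sum_(k in Lambda Omega t.+1 j) s_w (st t.+1) k <=
  (\sum_(k in Lambda Omega t j) s_w (st t) k) *
    expR (- (eta_w * l (s_fhat (st t.+1) j) (y t.+1)) + eta_w ^+ 2 / 8).
Proof.
move=> eta_gt0 y_mem nested.
have [_ _ w_gt0] := state_at_gt0 t.
have Lambda_sub : Lambda Omega t.+1 j \subset Lambda Omega t j by exact: setUS.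
have shrink : \sum_(k in Lambda Omega t.+1 j) s_w (st t.+1) k <=
              \sum_(k in Lambda Omega t j) s_w (st t.+1) k.
  rewrite [X in _ <= X](big_setID (Lambda Omega t.+1 j)) /= (setIidPr Lambda_sub) lerDl.
  by apply: sumr_ge0 => k _; rewrite mulr_ge0 ?expR_ge0 ?ltW.
apply: le_trans shrink _; rewrite -!big_enum.
have loss_itv k : 0 <= l (fbar f (st t) t k) (y t.+1) <= 1.
  by apply: l_itv => //; exact: fbar_mem.
apply: hoeffding_weighted (ltW eta_gt0) (fun k => ltW (w_gt0 k)) loss_itv _ _.
  exact: sumr_pos_gt0 (size_enum_Lambda t j).
rewrite fhat_wavg; apply: (jensen_wavg A_convex l_convex w_gt0) => //.
  exact: fbar_mem.
exact: size_enum_Lambda.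
Qed.

Lemma L_bar_sub_L_expert_le T j : 0 < eta_a ->
  (forall t, (1 <= t <= T)%N -> Y (y t)) ->
  L_bar T j - L_expert l f y T j <= eta_a * T%:R / 8 + ln 2 / eta_a.
Proof.
move=> eta_gt0 y_mem; apply: sub_le_of_potential => //.
have [_ a'_gt0 _] := state_at_gt0 T.
rewrite -s_alpha_state_at.
apply: le_trans (potential_telescope (Phi := fun t => s_alpha (st t) j + s_alpha' (st t) j) _).
  by rewrite lerDl ltW.
by move=> t tT; apply: indiv_potential_step => //; exact: y_mem.
Qed.

Lemma L_hat_sub_L_bar_le T j : 0 < eta_w ->
  (forall t, (1 <= t <= T)%N -> Y (y t)) ->
  (forall t, (1 <= t <= T)%N -> Omega t j \subset Omega t.-1 j) ->
  L_hat eta_a eta_w l f y Omega T j - L_bar T j <=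
    eta_w * T%:R / 8 + ln (deg Omega 0 j)%:R / eta_w.
Proof.
move=> eta_gt0 y_mem nested; apply: sub_le_of_potential => //.
  by rewrite ltr0n /deg card_gt0; apply/set0Pn; exists j; exact: setU11.
have [_ _ w_gt0] := state_at_gt0 T.
rewrite -s_w_state_at.
have Phi0 : \sum_(k in Lambda Omega 0 j) s_w (st 0) k = (deg Omega 0 j)%:R.
  by rewrite /= sumr_const.
rewrite -Phi0; apply: le_trans
  (potential_telescope (Phi := fun t => \sum_(k in Lambda Omega t j) s_w (st t) k)
     (x := fun t => l (s_fhat (st t) j) (y t)) _).
  by rewrite (bigD1 j) ?setU11 //= lerDl; apply: sumr_ge0 => k _; exact: ltW.
move=> t tT; apply: social_potential_step => //; first exact: y_mem.
exact: nested.
Qed.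

Lemma L_expert_sub_le T (L1 Delta : R) (delta : nat -> R) i k : 0 <= L1 ->
  (forall t, (1 <= t <= T)%N -> Y (y t)) ->
  (forall x1 x2 z, A x1 -> A x2 -> Y z -> `|l x1 z - l x2 z| <= L1 * enorm (x1 - x2)) ->
  (forall t, (1 <= t <= T)%N -> enorm (f t i - f t k) <= delta t) ->
  \sum_(1 <= t < T.+1) delta t <= Delta ->
  L_expert l f y T i - L_expert l f y T k <= L1 * Delta.
Proof.
move=> L1_ge0 y_mem l_lip f_close sum_le.
apply: le_trans (ler_wpM2l L1_ge0 sum_le); rewrite /L_expert -sumrB mulr_sumr.
apply: ler_sum_nat => t tT; have /andP[t_ge1 _] := tT.
apply: le_trans (ler_norm _) _; apply: le_trans (l_lip _ _ _ _ _ _) _.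
- exact: f_mem.
- exact: f_mem.
- exact: y_mem.
- exact/ler_wpM2l/f_close.
Qed.

End D2EAL.

Theorem corollary3 (R : realType) (N n : nat) (hN : (1 <= N)%N) (T : nat) (hT : (1 <= T)%N)
  (A Y : 'rV[R]_n -> Prop) (hA : convex_set A) (hY : convex_set Y)
  (l : 'rV[R]_n -> 'rV[R]_n -> R)
  (hl01 : forall x z, A x -> Y z -> 0 <= l x z <= 1)
  (hlconv : forall x1 x2 z (lam : R), A x1 -> A x2 -> Y z -> 0 <= lam <= 1 ->
     l (lam *: x1 + (1 - lam) *: x2) z <= lam * l x1 z + (1 - lam) * l x2 z)
  (y : nat -> 'rV[R]_n) (hy : forall t, (1 <= t <= T)%N -> Y (y t))
  (f : nat -> 'I_N -> 'rV[R]_n) (hf : forall t k, (1 <= t)%N -> A (f t k))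
  (Omega : nat -> 'I_N -> {set 'I_N})
  (hsym : forall t j k, (j \in Omega t k) = (k \in Omega t j))
  (eta_a eta_w : R) (heta_a : 0 < eta_a) (heta_w : 0 < eta_w)
  (i : 'I_N)
  (* Assumption 1 *)
  (hnest : forall t, (1 <= t <= T)%N -> Omega t i \subset Omega t.-1 i)
  (* Assumption 2 *)
  (L1 : R) (hL1 : 0 <= L1)
  (hlip : forall x1 x2 z, A x1 -> A x2 -> Y z ->
     `| l x1 z - l x2 z | <= L1 * enorm (x1 - x2))
  (* Assumption 3 *)
  (delta : nat -> R) (hdelta0 : forall t, (1 <= t <= T)%N -> 0 <= delta t)
  (hdelta : forall t k j, (1 <= t <= T)%N -> enorm (f t k - f t j) <= delta t)
  (Delta_o : R) (hDelta : \sum_(1 <= t < T.+1) delta t <= Delta_o)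
  (istar : 'I_N) (histar : forall j, L_expert l f y T istar <= L_expert l f y T j) :
  L_hat eta_a eta_w l f y Omega T i - L_expert l f y T istar <=
    eta_w * T%:R / 8 + ln ((deg Omega 0 i)%:R) / eta_w
    + eta_a * T%:R / 8 + ln 2 / eta_a + L1 * Delta_o.
Proof.
have social := L_hat_sub_L_bar_le eta_a hA hlconv hl01 hf heta_w hy hnest.
have individual := L_bar_sub_L_expert_le Omega eta_w hA hlconv hl01 hf i heta_a hy.
have experts := L_expert_sub_le hf hL1 hy hlip (fun t => hdelta t i istar) hDelta.
lra.
Qed.
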